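(* Let $T(x,z,t)=\sum_{n\ge0}\Theta_n(z,t)x^n$, with $\Theta_0=1$. (i) For the weights $a_j=1$ for all $j$, as formal power series in $x,z$, \[ T(x,z,t)=\frac{1-zt}{(1-zt)(1-x)-zx}. \] (ii) For the weights $a_j=1/j$, for complex $z,t$ with $zt\notin\{1,2,3,\dots\}$, as a formal power series in $x$, \[ T(x,z,t)={}_2F_1\big(1,\,1+z(1-t);\,1-zt;\,x\big)=\sum_{n\ge0}\frac{(1+z(1-t))_n}{(1-zt)_n}x^n, \] where $(c)_n=c(c+1)\cdots(c+n-1)$.
   Context: Let $\boldsymbol a=(a_j)_{j\ge1}$ be a sequence of positive reals. For $\vec\ell=(\ell_1,\dots,\ell_k)$ with $n\ge\ell_1\ge\cdots\ge\ell_k\ge1$ let $\sigma(\vec\ell)=|\{1\le j\le k-1:\ell_j=\ell_{j+1}\}|$ and $w(\vec\ell)=\prod_j a_{\ell_j}$. Let $\theta_{n;k}(t)=\sum_{n\ge\ell_1\ge\cdots\ge\ell_k\ge1}w(\vec\ell)t^{\sigma(\vec\ell)}$ ($\theta_{n;0}=1$) and $\Theta_n(z,t)=\sum_{k\ge0}\theta_{n;k}(t)z^k$ (so $\Theta_0=1$). *)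

From HB Require Import structures.
From mathcomp Require Import all_boot all_order all_algebra.
Set Implicit Arguments. Unset Strict Implicit. Unset Printing Implicit Defensive.
Import Order.TTheory GRing.Theory Num.Theory.
Local Open Scope ring_scope.

(* A sequence n >= l_1 >= ... >= l_k >= 1 is encoded as a k-tuple of
   ordinals i : 'I_n with l_j = i_j + 1, weakly decreasing. *)

Definition sigma (n : nat) (l : seq 'I_n) : nat :=
  count (fun p : 'I_n * 'I_n => p.1 == p.2) (zip l (behead l)).

(* theta_{n;k}(t) = sum over n >= l_1 >= ... >= l_k >= 1 of
   (prod_j a_{l_j}) t^{sigma(l)};  the weights are a : nat -> R, with a j = a_j
   (a 0 is never used). *)
Definition theta (R : ringType) (a : nat -> R) (n k : nat) (t : R) : R :=
  \sum_(l : k.-tuple 'I_n |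
          sorted (fun x y : 'I_n => (nat_of_ord y <= nat_of_ord x)%N) l)
    (\prod_(i <- l) a (nat_of_ord i).+1) * t ^+ sigma l.

(* Bivariate formal power series in (x, z): coefficient of x^n z^k is f n k. *)
Definition ps2_mul (R : ringType) (f g : nat -> nat -> R) (n k : nat) : R :=
  \sum_(i < n.+1) \sum_(j < k.+1) f i j * g (n - i)%N (k - j)%N.

(* T(x,z,t) = sum_n Theta_n(z,t) x^n = sum_{n,k} theta_{n;k}(t) x^n z^k *)
Definition Tcoef (R : ringType) (a : nat -> R) (t : R) (n k : nat) : R :=
  theta a n k t.

(* coefficients of (1 - z t)(1 - x) - z x = 1 - x - t z + (t - 1) x z *)
Definition Dcoef (R : ringType) (t : R) (n k : nat) : R :=
  match n, k with
  | 0, 0 => 1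
  | 1, 0 => -1
  | 0, 1 => - t
  | 1, 1 => t - 1
  | _, _ => 0
  end.

(* coefficients of 1 - z t *)
Definition Ncoef (R : ringType) (t : R) (n k : nat) : R :=
  match n, k with
  | 0, 0 => 1
  | 0, 1 => - t
  | _, _ => 0
  end.

Definition poch (R : ringType) (c : {poly R}) (n : nat) : {poly R} :=
  \prod_(i < n) (c + (i%:R)%:P).

From HB Require Import structures.
From mathcomp Require Import all_boot all_order all_algebra.
From mathcomp Require Import ring.
Import GRing.Theory.
Set Implicit Arguments. Unset Strict Implicit.
Local Open Scope ring_scope.

(* Both parts of the theorem rest on a single recursion in n for the
   generating polynomials Theta_n(z,t) of weakly decreasing sequences:
     Theta_{n+1} (1 - a_{n+1} t z) = Theta_n (1 + a_{n+1} (1 - t) z),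
   i.e. coefficientwise (theta_SS)
     theta_{n+1;k+1} = theta_{n;k+1} + a_{n+1}((1-t) theta_{n;k} + t theta_{n+1;k}).
   It is proved by a transfer argument: inside a fixed alphabet 'I_N the
   weighted sum of decreasing sequences below x (below_sum) and the one with
   a prescribed first letter y (head_sum) satisfy recursions in x and in the
   length k that make no reference to N.  These recursions are solved once
   and for all by the N-free functions theta_rec / head_rec, so theta_{n;k}
   equals theta_rec n k and the step identity becomes a computation.
   Part (i) (a_j = 1) is then a coefficient extraction in R[[x,z]]; part (ii)
   (a_j = 1/j, characteristic 0) telescopes the step identity, taken modulo
   z^(k+1), along the Pochhammer products. *)

Lemma big_tuple_cons (R : nmodType) (T : finType) (k : nat) (P : pred (seq T))
    (F : seq T -> R) :
  \sum_(u : k.+1.-tuple T | P u) F u =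
  \sum_(x : T) \sum_(v : k.-tuple T | P (x :: v)) F (x :: v).
Proof.
rewrite [RHS](pair_big_dep xpredT (fun x (v : k.-tuple T) => P (x :: v))) /=.
rewrite (reindex (fun p : T * k.-tuple T => [tuple of p.1 :: p.2])) //=.
exists (fun u : k.+1.-tuple T => (thead u, [tuple of behead u])).
  by move=> [x v] _ /=; congr (_, _); apply: val_inj.
by move=> u _; rewrite [RHS]tuple_eta.
Qed.

Definition decr (N : nat) : rel 'I_N := fun i j => (j <= i)%N.

(* For a decreasing sequence, all letters are < x iff its first letter is. *)
Definition head_lt (N x : nat) (u : seq 'I_N) : bool :=
  if u is h :: _ then (h < x)%N else true.

Lemma sigma_cons (N : nat) (y : 'I_N) (v : seq 'I_N) :
  sigma (y :: v) = ((ohead v == Some y) + sigma v)%N.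
Proof. by case: v => [|z v] //; rewrite /sigma /= eq_sym. Qed.

Section DecreasingSums.
Variables (R : comNzRingType) (a : nat -> R) (t : R).

Definition weight (N : nat) (u : seq 'I_N) : R :=
  (\prod_(i <- u) a i.+1) * t ^+ sigma u.

Lemma weight_cons (N : nat) (y : 'I_N) (v : seq 'I_N) :
  weight (y :: v) = a y.+1 * t ^+ (ohead v == Some y) * weight v.
Proof. by rewrite /weight big_cons sigma_cons exprD; ring. Qed.

Definition below_sum (N x k : nat) : R :=
  \sum_(u : k.-tuple 'I_N | sorted (@decr N) u && head_lt x u) weight u.

Definition head_sum (N : nat) (y : 'I_N) (k : nat) : R :=
  \sum_(u : k.-tuple 'I_N | sorted (@decr N) u && (ohead u == Some y)) weight u.

Lemma below_sum0 (N k : nat) : below_sum N 0 k = (k == 0%N)%:R.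
Proof.
case: k => [|k]; rewrite /below_sum.
  rewrite (big_pred1 [tuple]) => [|u]; first by rewrite /weight big_nil mul1r.
  by rewrite tuple0.
by rewrite big_pred0 // => -[[|h v] //=]; rewrite andbF.
Qed.

Lemma below_sumS (N : nat) (y : 'I_N) (k : nat) :
  below_sum N y.+1 k = below_sum N y k + head_sum y k.
Proof.
rewrite /below_sum (bigID (fun u : k.-tuple 'I_N => ohead u == Some y)) /=.
rewrite addrC; congr (_ + _); apply: eq_bigl => -[[|h v] _] //=.
  rewrite -andbA [Some h == _]/eq_op /=; congr (_ && _).
  by rewrite ltnS [(h < y)%N]ltn_neqAle andbC.
rewrite -andbA [Some h == _]/eq_op /=; congr (_ && _).
by case: (h =P y) => [->|]; rewrite ?ltnSn ?andbF.
Qed.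

Lemma head_sum0 (N : nat) (y : 'I_N) : head_sum y 0 = 0.
Proof. by rewrite /head_sum big_pred0 // => u; rewrite tuple0 andbF. Qed.

(* Removing the first letter y leaves a sequence either below y (no new
   plateau) or again starting with y (one new plateau, factor t). *)
Lemma head_sumS (N : nat) (y : 'I_N) (k : nat) :
  head_sum y k.+1 = a y.+1 * (below_sum N y k + t * head_sum y k).
Proof.
rewrite /head_sum (big_tuple_cons k (fun u : seq 'I_N =>
  sorted (@decr N) u && (ohead u == Some y))) (bigD1 y) //=.
rewrite [X in _ + X]big1 ?addr0 => [|x xy]; last first.
  by rewrite big_pred0 // => v; rewrite [_ == _](negbTE xy) andbF.
rewrite eqxx (bigID (fun v : k.-tuple 'I_N => ohead v == Some y)) /= addrC.
rewrite mulrDr mulrCA !mulr_sumr; congr (_ + _); apply: eq_big.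
- move=> -[[|h v] _] //=; rewrite andbT [Some h == _]/eq_op /=.
  by rewrite -andbA andbC -andbA [(h < y)%N]ltn_neqAle.
- by move=> v /andP[_ /negbTE vy]; rewrite weight_cons vy mulr1.
- move=> -[[|h v] _] //=; rewrite andbT [Some h == _]/eq_op /=.
  by case: (h =P y) => [->|]; rewrite ?andbF // /decr leqnn.
- by move=> v /andP[_ vy]; rewrite weight_cons vy expr1 -mulrA mulrCA.
Qed.

(* Coefficients of c z L(z) / (1 - c t z): the solution of the recursion of
   head_sumS, given the coefficients L of the sum below the head. *)
Fixpoint head_rec (L : nat -> R) (c : R) (k : nat) : R :=
  if k is k'.+1 then c * (L k' + t * head_rec L c k') else 0.

(* The N-free solution of below_sum0 / below_sumS: theta_rec x k is the
   coefficient of z^k in Theta_x(z,t). *)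
Fixpoint theta_rec (x : nat) : nat -> R :=
  if x is x'.+1 then fun k => theta_rec x' k + head_rec (theta_rec x') (a x) k
  else fun k => (k == 0%N)%:R.

Lemma head_sum_rec (N : nat) (y : 'I_N) (L : nat -> R) :
  (forall k, below_sum N y k = L k) -> forall k, head_sum y k = head_rec L (a y.+1) k.
Proof.
by move=> yL; elim=> [|k IHk]; rewrite ?head_sum0 // head_sumS IHk yL.
Qed.

Lemma below_sum_rec (N x : nat) :
  (x <= N)%N -> forall k, below_sum N x k = theta_rec x k.
Proof.
elim: x => [|x IHx] xN k; first exact: below_sum0.
pose y := Ordinal xN.
have IHy : forall k, below_sum N y k = theta_rec x k := IHx (ltnW xN).
by rewrite -[x.+1]/(y.+1) below_sumS IHy (head_sum_rec IHy).
Qed.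

Lemma theta_recE (n k : nat) : theta a n k t = theta_rec n k.
Proof.
rewrite -(below_sum_rec (leqnn n)); apply: eq_bigl => u.
by case: u => -[|h v] //= _; rewrite ltn_ord andbT.
Qed.

Lemma theta_n0 (n : nat) : theta a n 0 t = 1.
Proof. by rewrite theta_recE; elim: n => //= n ->; rewrite addr0. Qed.

Lemma theta_0S (k : nat) : theta a 0 k.+1 t = 0.
Proof. by rewrite theta_recE. Qed.

Lemma theta_SS (n k : nat) :
  theta a n.+1 k.+1 t =
  theta a n k.+1 t + a n.+1 * ((1 - t) * theta a n k t + t * theta a n.+1 k t).
Proof. rewrite !theta_recE /=; ring. Qed.

End DecreasingSums.

Lemma sum_antidiag_deg1 (R : nmodType) (G : nat -> nat -> R) (k : nat) :
  (forall i m, (1 < m)%N -> G i m = 0) ->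
  \sum_(i < k.+1) G i (k - i)%N =
  G k 0%N + (if k is k'.+1 then G k' 1%N else 0).
Proof.
move=> G0; rewrite big_ord_recr subnn /= addrC; case: k => [|k].
  by rewrite big_ord0.
rewrite big_ord_recr subSnn /= big1 ?add0r // => i _.
by apply: G0; rewrite subSn ?ltnS ?subn_gt0 // ltnW.
Qed.

(* The denominator has degree <= 1 in x and in z, so each coefficient involves
   four values of theta; the boundary cases are theta_n0 / theta_0S and the
   generic case is theta_SS with a_{n+1} = 1. *)
Lemma unit_weights_series (R : comNzRingType) (t : R) (n k : nat) :
  ps2_mul (Tcoef (fun _ => 1) t) (Dcoef t) n k = Ncoef t n k.
Proof.
set T := Tcoef (fun _ => 1) t.
have D0 (m j : nat) : (1 < m)%N -> Dcoef t m j = 0 by case: m => [|[|m]].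
have D0' (j m : nat) : (1 < m)%N -> Dcoef t j m = 0 by case: j m => [|[|j]] [|[|m]].
rewrite /ps2_mul (sum_antidiag_deg1 (G := fun i m =>
  \sum_(j < k.+1) T i j * Dcoef t m (k - j))) => [|i m m1]; last first.
  by rewrite big1 // => j _; rewrite D0 ?mulr0.
case: n => [|n]; rewrite ?(sum_antidiag_deg1 (G := fun j m => T _ j * Dcoef t _ m));
  try by move=> j m m1; rewrite D0' ?mulr0.
all: case: k => [|k]; rewrite /T /Tcoef /= ?theta_n0 ?theta_0S.
- ring.
- by case: k => [|k]; rewrite ?theta_n0 ?theta_0S; ring.
- ring.
- rewrite theta_SS mul1r; ring.
Qed.

Lemma take_polyMl (R : comNzRingType) (m : nat) (p q : {poly R}) :
  take_poly m (take_poly m p * q) = take_poly m (p * q).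
Proof.
apply/polyP => i; rewrite !coef_take_poly; case: ltnP => // im.
rewrite !coefM; apply: eq_bigr => j _.
by rewrite coef_take_poly (leq_ltn_trans (leq_ord j) im).
Qed.

Lemma take_poly_telescope (R : comNzRingType) (K : nat) (F P Q : nat -> {poly R}) :
  take_poly K (F 0%N) = take_poly K 1 ->
  (forall n, take_poly K (F n.+1 * P n) = take_poly K (F n * Q n)) ->
  forall n, take_poly K (F n * \prod_(i < n) P i) = take_poly K (\prod_(i < n) Q i).
Proof.
move=> F0 FS; elim=> [|n IHn]; first by rewrite !big_ord0 mulr1.
rewrite !big_ord_recr /= mulrCA mulrC -[LHS]take_polyMl FS take_polyMl.
by rewrite mulrAC -[LHS]take_polyMl IHn take_polyMl.
Qed.

Definition theta_poly (R : comNzRingType) (a : nat -> R) (t : R) (K n : nat) :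
  {poly R} := \poly_(i < K) theta a n i t.

Lemma theta_poly_step (R : comNzRingType) (a : nat -> R) (t c : R) (K n : nat) :
  c * a n.+1 = 1 ->
  take_poly K (theta_poly a t K n.+1 * (c%:P - t *: 'X)) =
  take_poly K (theta_poly a t K n * (c%:P + (1 - t) *: 'X)).
Proof.
move=> ca; apply/polyP => i; rewrite !coef_take_poly; case: ltnP => // iK.
rewrite mulrBr mulrDr -!scalerAr !(coefB, coefD, coefZ, coefMC, coefMX).
rewrite !coef_poly iK; case: i iK => [|i] iK /=.
  by rewrite !theta_n0 !mulr0 subr0 addr0.
rewrite (ltnW iK) theta_SS mulrDl mulrAC [a _ * c]mulrC ca mul1r; ring.
Qed.

Lemma harmonic_weights_pochhammer (R : fieldType) (char0 : [pchar R] =i pred0)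
    (t : R) (n k : nat) :
  \sum_(i < k.+1)
     theta (fun j => (j%:R)^-1) n i t * (poch (1 - t *: 'X) n)`_(k - i)
  = (poch (1 + (1 - t) *: 'X) n)`_k.
Proof.
set a := fun j : nat => (j%:R : R)^-1.
pose F := theta_poly a t k.+1.
have F0 : take_poly k.+1 (F 0%N) = take_poly k.+1 1.
  apply/polyP => -[|i]; rewrite !coef_take_poly !coef_poly coef1 /=.
    by rewrite theta_n0.
  by rewrite theta_0S !if_same.
have FS (m : nat) : take_poly k.+1 (F m.+1 * (1 - t *: 'X + (m%:R)%:P)) =
                    take_poly k.+1 (F m * (1 + (1 - t) *: 'X + (m%:R)%:P)).
  have shift (q : {poly R}) : 1 + q + (m%:R)%:P = (m.+1%:R)%:P + q.
    by rewrite -natr1 polyCD polyC1; ring.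
  rewrite shift [in RHS]shift; apply: theta_poly_step.
  by rewrite /a mulfV // (pcharf0P _).1.
have /polyP/(_ k) := take_poly_telescope F0 FS n.
rewrite !coef_take_poly ltnSn coefM => <-; apply: eq_bigr => i _.
by rewrite coef_poly ltn_ord.
Qed.

Theorem mainTheorem8 :
  (* (i) a_j = 1:  T(x,z,t) * ((1-zt)(1-x) - zx) = 1 - zt  in R[[x,z]] *)
  (forall (R : comNzRingType) (t : R) (n k : nat),
      ps2_mul (Tcoef (fun _ => 1) t) (Dcoef t) n k = Ncoef t n k) /\
  (* (ii) a_j = 1/j:  for every n, Theta_n(z,t) * (1 - zt)_n = (1 + z(1-t))_n
     in R[[z]], i.e. the x^n-coefficient of T is (1+z(1-t))_n / (1-zt)_n *)
  (forall (R : fieldType) (HR : [pchar R] =i pred0) (t : R) (n k : nat),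
      \sum_(i < k.+1)
         theta (fun j => (j%:R)^-1) n i t * (poch (1 - t *: 'X) n)`_(k - i)
      = (poch (1 + (1 - t) *: 'X) n)`_k).
Proof.
split; [exact: unit_weights_series | exact: harmonic_weights_pochhammer].
Qed.
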